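(* The number of components of the closure $\widehat{\mathbb{L}}(p_1,q_1;\dots;p_r,q_r)$ of a Lorenz braid equals the multiplicity of $1$ as an eigenvalue (root of the characteristic polynomial) of the $(P_r+Q_r)\times(P_r+Q_r)$ permutation matrix $M$ defined as follows: index the rows by consecutive blocks of sizes $q_1,\dots,q_r,p_1,\dots,p_r$ and the columns by consecutive blocks of sizes $p_1,q_1,p_2,q_2,\dots,p_r,q_r$; for each $i$, the block of $M$ in row block $q_i$ and column block $q_i$ is $I_{q_i}$, the block in row block $p_i$ and column block $p_i$ is $I_{p_i}$, and all other blocks are zero. (This matrix $M$ equals $\lim_{t\to1}\beta_{P_r+Q_r}(\mathbb{L}(p_1,q_1;\dots;p_r,q_r))$.)
   Context: Lorenz braid: given $r\ge1$ and positive integers $p_1,q_1,\dots,p_r,q_r$, set $P_j=p_1+\cdots+p_j$, $Q_j=q_1+\cdots+q_j$. $\mathbb{L}(p_1,q_1;\dots;p_r,q_r)$ is the braid on $P_r+Q_r$ strands defined by: the top row is split into a left part of $Q_r$ points and a right part of $P_r$ points; the bottom row is split, from left to right, into consecutive parts of sizes $p_1,q_1,\dots,p_r,q_r$; the strands from the left top part are joined in order to the points of the parts of sizes $q_1,\dots,q_r$, and the strands from the right top part are joined in order to the points of the parts of sizes $p_1,\dots,p_r$; at each crossing the strand from the left top part passes over. Its closure (joining the $i$-th top point to the $i$-th bottom point for each $i$) is a Lorenz link. $\beta_n$ denotes the Burau representation $B_n\to\mathrm{GL}_n(\mathbb{Z}[t,t^{-1}])$, $\beta_n(\sigma_j)=I_{j-1}\oplus\begin{pmatrix}1-t&t\\1&0\end{pmatrix}\oplus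 I_{n-j-1}$. *)

From HB Require Import structures.
From mathcomp Require Import all_boot all_order all_algebra.
Set Implicit Arguments. Unset Strict Implicit. Unset Printing Implicit Defensive.
Import Order.TTheory GRing.Theory Num.Theory.

(* Parameters of a Lorenz braid L(p_1,q_1;...;p_r,q_r): the pairs (p_i,q_i)
   are (p (i-1), q (i-1)) for i = 1..r, i.e. indices 0 <= l < r. *)

Definition Psum (p : nat -> nat) (j : nat) : nat := \sum_(l < j) p l.
Definition Qsum (q : nat -> nat) (j : nat) : nat := \sum_(l < j) q l.

Definition lorenz_n (r : nat) (p q : nat -> nat) : nat := Psum p r + Qsum q r.

(* Bottom row, split from left to right into consecutive parts of sizes
   p_1,q_1,...,p_r,q_r (0-based positions). *)
Definition bot_pstart (p q : nat -> nat) (l : nat) : nat := \sum_(m < l) (p m + q m).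
Definition bot_qstart (p q : nat -> nat) (l : nat) : nat := bot_pstart p q l + p l.

Definition bot_qpoints (r : nat) (p q : nat -> nat) : seq nat :=
  flatten [seq [seq bot_qstart p q l + k | k <- iota 0 (q l)] | l <- iota 0 r].
Definition bot_ppoints (r : nat) (p q : nat -> nat) : seq nat :=
  flatten [seq [seq bot_pstart p q l + k | k <- iota 0 (p l)] | l <- iota 0 r].

(* Strand map of the Lorenz braid: the strand starting at top point x
   (0-based) ends at bottom point lorenz_strand r p q x.  The top row is a
   left part of Q_r points followed by a right part of P_r points; the left
   strands go in order to the q-parts, the right strands in order to the
   p-parts. *)
Definition lorenz_strand (r : nat) (p q : nat -> nat) (x : nat) : nat :=
  if x < Qsum q r then nth 0 (bot_qpoints r p q) x
  else nth 0 (bot_ppoints r p q) (x - Qsum q r).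

(* Closure: bottom point i is joined to top point i, so following a component
   of the closed braid amounts to iterating the strand map on 'I_n. *)
Definition closure_step (r : nat) (p q : nat -> nat) (x : 'I_(lorenz_n r p q))
  : 'I_(lorenz_n r p q) := insubd x (lorenz_strand r p q x).

Definition lorenz_link_components (r : nat) (p q : nat -> nat) : nat :=
  #|[set [set y : 'I_(lorenz_n r p q) | fconnect (@closure_step r p q) x y] | x : 'I_(lorenz_n r p q)]|.

Definition row_qstart (q : nat -> nat) (l : nat) : nat := Qsum q l.
Definition row_pstart (r : nat) (p q : nat -> nat) (l : nat) : nat :=
  Qsum q r + Psum p l.

Definition lorenz_M (r : nat) (p q : nat -> nat) : 'M[rat]_(lorenz_n r p q) :=
  \matrix_(i, j)
    (if [exists l : 'I_r,
          ((row_qstart q l <= i < row_qstart q l + q l) &&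
           (j == bot_qstart p q l + (i - row_qstart q l) :> nat))
       || ((row_pstart r p q l <= i < row_pstart r p q l + p l) &&
           (j == bot_pstart p q l + (i - row_pstart r p q l) :> nat))]
     then 1%R else 0%R).

From HB Require Import structures.
From mathcomp Require Import all_boot all_order all_algebra.
Import Order.TTheory GRing.Theory Num.Theory.
From mathcomp Require Import fingroup perm zify.
Set Implicit Arguments. Unset Strict Implicit. Unset Printing Implicit Defensive.

(* Following a component of the closed braid means iterating the strand
   permutation s of the endpoints, and M is the permutation matrix of s.
   Listing the points of each cycle of s consecutively conjugates M to a
   block-diagonal matrix whose blocks are the companion matrices of X^k - 1,
   one for each cycle of length k.  Since 1 is a simple root of X^k - 1 in
   characteristic 0, the multiplicity of 1 as an eigenvalue of M is the
   number of cycles. *)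

Section PrefixSums.
Variable c : nat -> nat.
Local Notation psum l := (\sum_(m < l) c m).

Lemma psumS l : psum l.+1 = psum l + c l.
Proof. exact: big_ord_recr. Qed.

Lemma leq_psum l l' : l <= l' -> psum l <= psum l'.
Proof.
move=> le_ll'; rewrite -(subnK le_ll'); elim: (l' - l) => [|t IH] //.
by rewrite addSn psumS (leq_trans IH) ?leq_addr.
Qed.

Lemma psum_offset_inj l l' k k' : k < c l -> k' < c l' ->
  psum l + k = psum l' + k' -> l = l' /\ k = k'.
Proof.
move=> lt_k lt_k' eq_lk; case: (ltngtP l l') => [lt_ll'|lt_l'l|eq_ll].
- by have := leq_psum lt_ll'; rewrite psumS; lia.
- by have := leq_psum lt_l'l; rewrite psumS; lia.
- by subst; split => //; lia.
Qed.

Lemma psum_offset_cover r i : i < psum r ->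
  exists l k, [/\ l < r, k < c l & i = psum l + k].
Proof.
elim: r => [|r IH]; first by rewrite big_ord0.
rewrite psumS => lt_i; case: (ltnP i (psum r)) => [/IH|le_ri].
  by move=> [l [k [lt_lr lt_k ->]]]; exists l, k; split => //; lia.
by exists r, (i - psum r); split => //; lia.
Qed.

Variable a : nat -> nat.
Local Notation blocks r :=
  (flatten [seq [seq a l + k | k <- iota 0 (c l)] | l <- iota 0 r]).

Lemma size_blocks r : size (blocks r) = psum r.
Proof.
elim: r => [|r IH]; first by rewrite big_ord0.
rewrite -addn1 iotaD map_cat flatten_cat size_cat IH /= cats0 size_map size_iota.
by rewrite addn1 psumS.
Qed.

Lemma nth_blocks r l k : l < r -> k < c l -> nth 0 (blocks r) (psum l + k) = a l + k.
Proof.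
elim: r => [//|r IH] lt_lr lt_k.
rewrite -addn1 iotaD map_cat flatten_cat nth_cat size_blocks /= cats0.
case: (ltngtP l r) => [lt_lr'|lt_rl|<-]; [|lia|].
  have := leq_psum lt_lr'; rewrite psumS => le_psum.
  by rewrite ifT ?IH // (leq_trans _ le_psum) // ltn_add2l.
by rewrite ltnNge leq_addr /= addKn !add0n (nth_map 0) ?size_iota ?nth_iota ?add0n.
Qed.

End PrefixSums.

Lemma card_fconnect_classes (T : finType) (g : T -> T) : injective g ->
  #|[set [set y | fconnect g x y] | x : T]| = fcard g T.
Proof.
move=> g_inj; have sym_g := fconnect_sym g_inj.
pose cl x := [set y | fconnect g x y].
have cl_root x : cl (froot g x) = cl x.
  by apply/setP => y; rewrite !inE -(same_connect sym_g (connect_root _ x)).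
have cl_inj : {in froots g &, injective cl}.
  move=> x y /eqP rx /eqP ry /setP/(_ y); rewrite !inE connect0.
  by move/(fingraph.rootP sym_g); rewrite rx ry.
rewrite /n_comp_mem (@eq_card _ _ (froots g)) => [|x]; last by rewrite !inE andbT.
rewrite -(card_in_imset cl_inj); apply: eq_card => A.
apply/imsetP/imsetP => [[x _ ->]|[x _ ->]]; last by exists x.
by exists (froot g x); rewrite ?cl_root // inE roots_root.
Qed.

Section PermutationMatrices.
Local Open Scope ring_scope.

Lemma perm_mxE (R : pzSemiRingType) n (s : 'S_n) i j : perm_mx s i j = (s i == j)%:R :> R.
Proof. by rewrite !mxE. Qed.

Lemma companionmx_Xn_sub1 (R : nzRingType) k (i j : 'I_(size ('X^k - 1 : {poly R})).-1) :
  (0 < k)%N -> companionmx ('X^k - 1 : {poly R}) i j = (j == (i.+1 %% k)%N :> nat)%:R.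
Proof.
move=> k_gt0.
have szk : (size ('X^k - 1 : {poly R})).-1 = k by rewrite -polyC1 size_XnsubC.
have ltik : (i < k)%N := leq_trans (ltn_ord i) (eq_leq szk).
have ltjk : (j < k)%N := leq_trans (ltn_ord j) (eq_leq szk).
have szk1 : (size ('X^k - 1 : {poly R})).-1.-1 = k.-1 by rewrite szk.
rewrite mxE szk1 coefB coefXn coefC.
case: eqP => [->|ne_ik].
  by rewrite prednK // modnn (ltn_eqF ltjk) sub0r opprK; case: eqP.
rewrite eq_sym modn_small //; move: ne_ik ltik; move: (val i) => a; lia.
Qed.

Lemma det_mxsub_bij (R : comNzRingType) n (f : 'I_n -> 'I_n) (B : 'M[R]_n) :
  injective f -> \det (mxsub f f B) = \det B.
Proof.
move=> f_inj; pose s := perm f_inj.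
have -> : mxsub f f B = perm_mx s *m B *m perm_mx s^-1.
  by rewrite -row_permE -col_permE; apply/matrixP => i j; rewrite !mxE ?invgK !permE.
by rewrite !det_mulmx mulrAC -det_mulmx -perm_mxM mulgV perm_mx1 det1 mul1r.
Qed.

Lemma char_poly_mxsub (R : comNzRingType) m n (f : 'I_m -> 'I_n) (A : 'M[R]_n) :
  injective f -> m = n -> char_poly (mxsub f f A) = char_poly A.
Proof.
move=> f_inj eq_mn; subst m; rewrite /char_poly -(det_mxsub_bij (char_poly_mx A) f_inj).
by congr (\det _); apply/matrixP => i j; rewrite !mxE (inj_eq f_inj).
Qed.

Lemma char_poly_block_diag (R : comNzRingType) m n (A : 'M[R]_m) (D : 'M[R]_n) :
  char_poly (block_mx A 0 0 D) = char_poly A * char_poly D.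
Proof. by rewrite /char_poly char_block_diag_mx det_ublock. Qed.

Section CycleRemoval.
Variables (n : nat) (s : 'S_n) (x : 'I_n).

Definition cycle_of : {set 'I_n} := [set y | fconnect s x y].
Local Notation C := (~: cycle_of).

Lemma cycle_ofS y : (s y \in cycle_of) = (y \in cycle_of).
Proof.
rewrite !inE; apply/idP/idP => [xsy|xy]; last exact: connect_trans xy (fconnect1 _ _).
by apply: connect_trans xsy _; rewrite fconnect_sym ?fconnect1 //; apply: perm_inj.
Qed.

Definition restr_cycle_fun (b : 'I_#|C|) : 'I_#|C| :=
  enum_rank_in (enum_valP b) (s (enum_val b)).

Lemma restr_cycle_funE b : enum_val (restr_cycle_fun b) = s (enum_val b).
Proof. by rewrite enum_rankK_in // inE cycle_ofS -in_setC enum_valP. Qed.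

Lemma restr_cycle_fun_inj : injective restr_cycle_fun.
Proof.
move=> b1 b2 /(congr1 enum_val).
by rewrite !restr_cycle_funE => /perm_inj/enum_val_inj.
Qed.

Definition perm_off_cycle : 'S_#|C| := perm restr_cycle_fun_inj.

Lemma perm_off_cycleE b : enum_val (perm_off_cycle b) = s (enum_val b).
Proof. by rewrite permE restr_cycle_funE. Qed.

Lemma fcard_perm_off_cycle : fcard s 'I_n = (fcard perm_off_cycle 'I_#|C|).+1.
Proof.
have sym_s := fconnect_sym (@perm_inj _ s).
have sym_s' := fconnect_sym (@perm_inj _ perm_off_cycle).
rewrite (n_compC cycle_of) -add1n; congr (_ + _)%N.
  by rewrite -(n_comp_connect sym_s x); apply: eq_n_comp_r => y; rewrite inE.
rewrite (eq_n_comp_r (a' := C)); last by move=> y; rewrite !inE.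
have closedC : closed (frel s) C.
  by apply: intro_closed => // y z /eqP <-; rewrite !in_setC cycle_ofS.
rewrite (adjunction_n_comp enum_val sym_s sym_s' closedC).
  by apply: eq_n_comp_r => b; have := enum_valP b; rewrite !inE.
apply: (strict_adjunction sym_s' closedC enum_val_inj).
  apply/subsetP => y Cy; apply/codomP.
  by exists (enum_rank_in Cy y); rewrite enum_rankK_in.
by move=> b1 b2 _; rewrite /= -perm_off_cycleE (inj_eq enum_val_inj).
Qed.

Let k := fingraph.order s x.

Lemma card_cycle_of : #|cycle_of| = k.
Proof. by apply: eq_card => y; rewrite inE. Qed.

Lemma iter_cycle_eq a b : (a < k)%N -> (b < k)%N ->
  (iter a s x == iter b s x) = (a == b).
Proof.
move=> ak bk; apply/eqP/eqP => [eq_ab|->//].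
by rewrite -(findex_iter ak) -(findex_iter bk) eq_ab.
Qed.

Lemma perm_iter_cycle a : (a < k)%N -> s (iter a s x) = iter (a.+1 %% k) s x.
Proof.
move=> ak; rewrite -iterS; have [ltak|] := ltnP a.+1 k; first by rewrite modn_small.
move=> leka; have -> : a.+1 = k by apply/eqP; rewrite eqn_leq ak.
by rewrite modnn (iter_order (@perm_inj _ s)).
Qed.

Lemma char_poly_perm_off_cycle (R : comNzRingType) :
  char_poly (perm_mx s : 'M[R]_n) =
  ('X^k - 1) * char_poly (perm_mx perm_off_cycle).
Proof.
pose c : {poly R} := 'X^k - 1.
have k_gt0 : (0 < k)%N := fingraph.order_gt0 s x.
have sz_c : (size c).-1 = k by rewrite /c -polyC1 size_XnsubC.
have lt_k (a : 'I_(size c).-1) : (a < k)%N := leq_trans (ltn_ord a) (eq_leq sz_c).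
have on_cycle a : iter a s x \in cycle_of by rewrite inE fconnect_iter.
have off_cycle (b : 'I_#|C|) : enum_val b \notin cycle_of.
  by rewrite -in_setC enum_valP.
pose f (i : 'I_((size c).-1 + #|C|)) : 'I_n :=
  match split i with inl a => iter a s x | inr b => enum_val b end.
have f_inj : injective f.
  move=> i1 i2; rewrite -[i1]splitK -[i2]splitK /f !unsplitK.
  case: (split i1) => a1; case: (split i2) => a2 /= eq12.
  - congr (unsplit (inl _)); apply/val_inj/eqP.
    by rewrite -iter_cycle_eq ?lt_k ?eq12.
  - by have := off_cycle a2; rewrite -eq12 on_cycle.
  - by have := off_cycle a1; rewrite eq12 on_cycle.
  - by rewrite (enum_val_inj eq12).
have f_block :
    mxsub f f (perm_mx s) = block_mx (companionmx c) 0 0 (perm_mx perm_off_cycle).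
  apply/matrixP => i j; rewrite mxE perm_mxE -[i]splitK -[j]splitK /f !unsplitK.
  case: (split i) => a; case: (split j) => b.
  - rewrite block_mxEul companionmx_Xn_sub1 // perm_iter_cycle ?lt_k //.
    by rewrite iter_cycle_eq ?lt_k ?ltn_mod // eq_sym.
  - rewrite block_mxEur mxE; case: eqP => // eq_ab.
    by have := off_cycle b; rewrite -eq_ab cycle_ofS on_cycle.
  - rewrite block_mxEdl mxE; case: eqP => // eq_ab.
    by have := off_cycle a; rewrite -cycle_ofS eq_ab on_cycle.
  - by rewrite block_mxEdr perm_mxE -perm_off_cycleE (inj_eq enum_val_inj).
have card_C : ((size c).-1 + #|C| = n)%N.
  by rewrite sz_c -[RHS]card_ord -(cardsC cycle_of) card_cycle_of.
rewrite -(char_poly_mxsub _ f_inj card_C) f_block char_poly_block_diag companionmxK //.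
by rewrite /c -polyC1 monicXnsubC.
Qed.

End CycleRemoval.

Lemma mup1_Xn_sub1 (R : numFieldType) k : (0 < k)%N -> mup (1 : R) ('X^k - 1) = 1%N.
Proof.
move=> k_gt0; have not_root1 : ~~ root (\sum_(i < k) 'X^i : {poly R}) 1.
  rewrite /root horner_sum (eq_bigr (fun=> 1)) => [|i _]; last by rewrite hornerXn expr1n.
  by rewrite sumr_const card_ord pnatr_eq0 -lt0n.
have sum_neq0 : \sum_(i < k) 'X^i != 0 :> {poly R}.
  by apply: contraNneq not_root1 => ->; rewrite root0.
by rewrite subrX1 -polyC1 mupM ?polyXsubC_eq0 // -['X - _]expr1 mup_XsubCX eqxx mupNroot.
Qed.

Theorem mup1_char_poly_perm_mx (R : numFieldType) n (s : 'S_n) :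
  mup 1 (char_poly (perm_mx s : 'M[R]_n)) = fcard s 'I_n.
Proof.
elim/ltn_ind: n s => -[|n] IH s.
  rewrite /char_poly det_mx00 mupNroot ?root1 // /n_comp_mem.
  by apply/esym/eq_card0 => -[].
pose x : 'I_n.+1 := ord0; have k_gt0 := fingraph.order_gt0 s x.
rewrite (char_poly_perm_off_cycle s x) mupM ?mup1_Xn_sub1 ?IH //.
- by rewrite (fcard_perm_off_cycle s x).
- by rewrite -[ltnRHS]card_ord -(cardsC (cycle_of s x)) card_cycle_of; lia.
- by rewrite -polyC1 monic_neq0 ?monicXnsubC.
- exact: monic_neq0 (char_poly_monic _).
Qed.

End PermutationMatrices.

Section LorenzStrands.
Variables (r : nat) (p q : nat -> nat).
Local Notation n := (lorenz_n r p q).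
Local Notation strand := (lorenz_strand r p q).

Definition bot_size j := if odd j then q j./2 else p j./2.

Lemma bot_pstartE l : bot_pstart p q l = \sum_(m < l.*2) bot_size m.
Proof.
elim: l => [|l IH]; first by rewrite /bot_pstart !big_ord0.
rewrite doubleS !psumS -IH /bot_pstart big_ord_recr /bot_size /= odd_double /=.
by rewrite doubleK uphalf_double addnA.
Qed.

Lemma bot_qstartE l : bot_qstart p q l = \sum_(m < l.*2.+1) bot_size m.
Proof. by rewrite psumS -bot_pstartE /bot_size odd_double doubleK. Qed.

Lemma lorenz_nE : n = \sum_(m < r.*2) bot_size m.
Proof. by rewrite -bot_pstartE /bot_pstart big_split. Qed.

Lemma lorenz_strand_left l k : l < r -> k < q l ->
  strand (Qsum q l + k) = bot_qstart p q l + k.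
Proof.
move=> lt_lr lt_k; rewrite /lorenz_strand ifT; last first.
  by have := leq_psum q lt_lr; rewrite psumS /Qsum; lia.
exact: nth_blocks.
Qed.

Lemma lorenz_strand_right l k : l < r -> k < p l ->
  strand (Qsum q r + Psum p l + k) = bot_pstart p q l + k.
Proof.
move=> lt_lr lt_k; rewrite /lorenz_strand ifF; last by lia.
by rewrite -addnA addKn; exact: nth_blocks.
Qed.

Lemma top_point_cases x : x < n ->
  (exists l k, [/\ l < r, k < q l & x = Qsum q l + k]) \/
  (exists l k, [/\ l < r, k < p l & x = Qsum q r + Psum p l + k]).
Proof.
rewrite /lorenz_n => lt_xn; case: (ltnP x (Qsum q r)) => [/psum_offset_cover|le_Qx].
  by left.
right; have /psum_offset_cover [l [k [lt_lr lt_k eq_x]]] : x - Qsum q r < Psum p r by lia.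
by exists l, k; split => //; rewrite /Psum; lia.
Qed.

Lemma lorenz_strand_bottom_part x : x < n -> exists j k,
  [/\ j < r.*2, k < bot_size j & strand x = \sum_(m < j) bot_size m + k].
Proof.
case/top_point_cases => [[l [k [lt_lr lt_k ->]]]|[l [k [lt_lr lt_k ->]]]].
  exists l.*2.+1, k; rewrite lorenz_strand_left // bot_qstartE /bot_size /=.
  by rewrite odd_double uphalf_double ltn_Sdouble.
exists l.*2, k; rewrite lorenz_strand_right // bot_pstartE /bot_size.
by rewrite odd_double doubleK ltn_double.
Qed.

Lemma lorenz_strand_lt x : x < n -> strand x < n.
Proof.
case/lorenz_strand_bottom_part => j [k [lt_j lt_k ->]].
by have := leq_psum bot_size lt_j; rewrite psumS -lorenz_nE; lia.
Qed.

Lemma lorenz_strand_inj x1 x2 : x1 < n -> x2 < n -> strand x1 = strand x2 -> x1 = x2.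
Proof.
(* A strand ends in bottom part 2l+1 (left strands) or 2l (right strands) of
   the sequence p_1, q_1, ..., and the part and offset determine the strand. *)
move=> /top_point_cases [[l1 [k1 [lt1 ltk1 ->]]]|[l1 [k1 [lt1 ltk1 ->]]]]
       /top_point_cases [[l2 [k2 [lt2 ltk2 ->]]]|[l2 [k2 [lt2 ltk2 ->]]]];
  rewrite ?lorenz_strand_left ?lorenz_strand_right // ?bot_qstartE ?bot_pstartE;
  move=> /psum_offset_inj; rewrite /bot_size /= !odd_double /= ?uphalf_double ?doubleK;
  move=> /(_ ltk1 ltk2) [eq_l ->]; have eq_l12 : l1 = l2 by lia.
all: by subst l1; lia.
Qed.

End LorenzStrands.

Section LorenzPermutation.
Variables (r : nat) (p q : nat -> nat).
Local Notation n := (lorenz_n r p q).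

Lemma val_closure_step (x : 'I_n) : val (closure_step x) = lorenz_strand r p q x.
Proof. by rewrite val_insubd lorenz_strand_lt. Qed.

Lemma closure_step_inj : injective (@closure_step r p q).
Proof.
move=> x1 x2 /(congr1 val); rewrite !val_closure_step.
by move/lorenz_strand_inj => /(_ (ltn_ord x1) (ltn_ord x2)) /val_inj.
Qed.

Definition lorenz_perm : 'S_n := perm closure_step_inj.

Lemma lorenz_M_perm_mx : lorenz_M r p q = perm_mx lorenz_perm.
Proof.
apply/matrixP => i j; rewrite !mxE permE.
case: existsP => [[l /orP[] /andP[/andP[le_i lt_i] /eqP eq_j]] | no_l].
- suff -> : closure_step i = j by rewrite eqxx.
  apply: val_inj; rewrite /= val_closure_step eq_j -{1}(subnKC le_i).
  by rewrite lorenz_strand_left //; lia.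
- suff -> : closure_step i = j by rewrite eqxx.
  apply: val_inj; rewrite /= val_closure_step eq_j -{1}(subnKC le_i).
  by rewrite lorenz_strand_right //; lia.
case: eqP => // /(congr1 val); rewrite val_closure_step => eq_j; case: no_l.
case/top_point_cases: (ltn_ord i) eq_j => [] [l [k [lt_lr lt_k ->]]] <-.
  exists (Ordinal lt_lr); rewrite /row_qstart /= lorenz_strand_left //.
  by rewrite leq_addr ltn_add2l lt_k addKn eqxx.
exists (Ordinal lt_lr); rewrite /row_pstart /= lorenz_strand_right //.
by rewrite leq_addr ltn_add2l lt_k addKn eqxx orbT.
Qed.

End LorenzPermutation.

Theorem corollary6p11 (r : nat) (p q : nat -> nat) :
  (1 <= r)%N ->
  (forall i, (i < r)%N -> (0 < p i)%N /\ (0 < q i)%N) ->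
  lorenz_link_components r p q = mup (1 : rat) (char_poly (lorenz_M r p q)).
Proof.
move=> _ _; rewrite lorenz_M_perm_mx mup1_char_poly_perm_mx /lorenz_link_components.
rewrite card_fconnect_classes; last exact: closure_step_inj.
by apply: eq_fcard => x; rewrite permE.
Qed.
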